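(* Let $H$ be an undirected graph with $n$ vertices and let $G_{\mathrm{sub}}$ be a graph obtained from $H$ by subdividing each edge at most once. Then $\mathrm{dtw}(G_{\mathrm{sub}})\le\lceil n/2\rceil$, i.e., every acyclic orientation of $G_{\mathrm{sub}}$ has DAG treewidth at most $\lceil n/2\rceil$.
   Context: Subdividing an edge $\{u,v\}$ replaces it by a new vertex $w$ and edges $\{u,w\},\{w,v\}$. For a DAG $\vec H$, a source is a vertex of in-degree $0$; $S$ denotes the set of sources; $R(s)$ is the set of vertices reachable from $s$, and $R(B)=\bigcup_{s\in B}R(s)$. A DAG tree decomposition of $\vec H$ is a tree $T$ whose nodes (bags) are subsets of $S$ such that every source lies in some bag and, for any bags $B,B_1,B_2$ with $B$ on the path between $B_1$ and $B_2$ in $T$, $R(B_1)\cap R(B_2)\subseteq R(B)$; its width is the maximum bag size and $\mathrm{dtw}(\vec H)$ is the minimum width. For an undirected graph, $\mathrm{dtw}$ is the maximum of $\mathrm{dtw}(\vec H)$ over all its acyclic orientations $\vec H$. *)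

From mathcomp Require Import all_boot.
Set Implicit Arguments. Unset Strict Implicit. Unset Printing Implicit Defensive.

Section DAG.
Variable W : finType.
Variable a : rel W.  (* arc relation of a digraph: a x y means x -> y *)

Definition acyclic_digraph : Prop := forall x y, a x y -> ~~ connect a y x.

Definition sources : {set W} := [set x | [forall y, ~~ a y x]].

Definition reach (s : W) : {set W} := [set y | connect a s y].

Definition reachB (B : {set W}) : {set W} := \bigcup_(s in B) reach s.
End DAG.

Section Tree.
Variable I : finType.
Variable t : rel I.

Definition upath (j : I) (p : seq I) (k : I) : bool :=
  [&& path t j p, uniq (j :: p) & last j p == k].

Definition is_tree : Prop :=
  [/\ 0 < #|I|, symmetric t, irreflexive t,
      (forall j k, exists p, upath j p k) &
      (forall j k p q, upath j p k -> upath j q k -> p = q)].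

Definition on_path (i j k : I) : Prop :=
  forall p, upath j p k -> i \in j :: p.
End Tree.

Definition is_dag_td (W : finType) (a : rel W) (I : finType) (t : rel I)
  (B : I -> {set W}) : Prop :=
  [/\ is_tree t,
      (forall i, B i \subset sources a),
      (forall s, s \in sources a -> exists i, s \in B i) &
      (forall i j k, on_path t i j k ->
         reachB a (B j) :&: reachB a (B k) \subset reachB a (B i))].

Definition td_width (W : finType) (I : finType) (B : I -> {set W}) : nat :=
  \max_(i : I) #|B i|.

Definition dtw_le (W : finType) (a : rel W) (k : nat) : Prop :=
  exists (I : finType) (t : rel I) (B : I -> {set W}),
    is_dag_td a t B /\ td_width B <= k.

Definition is_orientation (W : finType) (g a : rel W) : Prop :=
  forall x y, (a x y -> g x y) /\ (g x y -> a x y != a y x).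

Definition dtw_undir_le (W : finType) (g : rel W) (k : nat) : Prop :=
  forall a : rel W, is_orientation g a -> acyclic_digraph a -> dtw_le a k.

(* H = (V, e) simple graph; F = set of edges of H (as 2-sets) that get
   subdivided once. The new vertex for s \in F is inr s. *)
Definition sub_vert (V : finType) (F : {set {set V}}) : finType :=
  (V + {s : {set V} | s \in F})%type.

Definition sub_adj (V : finType) (e : rel V) (F : {set {set V}})
  : rel (sub_vert F) :=
  fun x y => match x, y with
  | inl u, inl v => e u v && ([set u; v] \notin F)
  | inl u, inr s => u \in val s
  | inr s, inl v => v \in val s
  | inr _, inr _ => false
  end.
Arguments sub_adj {V} e F.

From mathcomp Require Import all_boot zify.
Set Implicit Arguments. Unset Strict Implicit. Unset Printing Implicit Defensive.

(* Let [Vs] be the original vertices of H, so that every arc entering a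
   subdivision vertex leaves [Vs].  Pick a maximal set [Z] of sources with
   [2 |Z| <= |Vs ∩ R(Z)|].  By maximality, every other source reaches at most
   one vertex of [Vp := Vs \ R(Z)].  Split [Vp] into halves [V1], [V2] and
   choose, for each vertex of [V_b], one source reaching it.  The two bags
   [X_b := Z ∪ (chosen sources of V_b)] have size at most
   [|Z| + ⌈|Vp|/2⌉ <= ⌈|Vs|/2⌉]; they form the centre of a double star whose
   remaining leaves are the singletons of the other sources, each attached to
   the side [b] of the half it reaches.  Whatever such a source [s] reaches
   besides itself is reached from [X_b]: a vertex of [Vs] directly, and a
   subdivision vertex through its predecessor, which lies in [Vs]. *)

Section DoubleStar.
Variables (W : finType) (side : W -> bool).

Definition dstar_node : finType := (bool + W)%type.

Definition dstar : rel dstar_node := fun x y =>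
  match x, y with
  | inl b, inl b' => b != b'
  | inl b, inr s | inr s, inl b => side s == b
  | inr _, inr _ => false
  end.

Definition dstar_path (j k : dstar_node) : seq dstar_node :=
  if j == k then [::] else
  match j, k with
  | inl _, inl _ => [:: k]
  | inl b, inr s => if side s == b then [:: k] else [:: inl (~~ b); k]
  | inr s, inl b => if side s == b then [:: k] else [:: inl (side s); k]
  | inr s, inr s' => if side s == side s' then [:: inl (side s); k]
                     else [:: inl (side s); inl (side s'); k]
  end.

Local Ltac rewrite_sides := repeat match goal with
  | E : side ?s = _ |- context[side ?s] => rewrite E end.

Local Ltac simpl_dstar := rewrite /dstar /= ?inE ?eqxx ?andbF ?andbT /=;
  rewrite_sides; rewrite /= ?inE ?eqxx ?andbF ?andbT /=.

Local Ltac by_sides :=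
  repeat (simpl_dstar; match goal with
    |- context[side ?s] => let E := fresh "E" in case E: (side s) end);
  simpl_dstar; try done.

Lemma dstar_path_upath j k : upath dstar j (dstar_path j k) k.
Proof.
rewrite /upath /dstar_path; case: eqP => [->|/eqP]; first by rewrite /= !eqxx.
case: j k => [b|s] [b'|s'] /=; rewrite ?inE => ne; rewrite ?inE ?eqxx ?ne /=.
all: try (have nss : s != s' by apply: contra ne => /eqP ->).
all: move: ne; rewrite ?inE ?eqxx //=.
all: try case: b; try case: b'; by_sides; rewrite ?nss.
Qed.

Lemma upath_dstar_path j p k : upath dstar j p k -> p = dstar_path j k.
Proof.
case: p => [|y1 p]; first by case/and3P=> _ _ /eqP /= <-; rewrite /dstar_path eqxx.
move=> jpk; have jk : j != k.
  case/and3P: jpk => _ /andP[nj _] /eqP lk; apply: contra nj => /eqP ->.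
  by rewrite -lk /= mem_last.
rewrite /dstar_path (negbTE jk); move: jpk jk; rewrite /upath.
(* a simple path visits at most the two centres and two leaves *)
case: p => [|y2 [|y3 [|y4 q]]] /=.
- move=> /and3P[pth uq /eqP <-] _; move: pth uq.
  by case: j y1 => [b|s] [b1|s1]; try case: b; try case: b1; by_sides.
- move=> /and3P[pth uq /eqP <-] _; move: pth uq.
  by case: j y1 y2 => [b|s] [b1|s1] [b2|s2]; try case: b; try case: b1;
    try case: b2; by_sides.
- move=> /and3P[pth uq /eqP <-] _; move: pth uq.
  by case: j y1 y2 y3 => [b|s] [b1|s1] [b2|s2] [b3|s3]; try case: b;
    try case: b1; try case: b2; try case: b3; by_sides.
- move=> /and3P[pth uq _] _; move: pth uq.
  by case: j y1 y2 y3 y4 => [b|s] [b1|s1] [b2|s2] [b3|s3] [b4|s4]; try case: b;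
    try case: b1; try case: b2; try case: b3; try case: b4; by_sides.
Qed.

Lemma dstar_tree : is_tree dstar.
Proof.
split.
- by apply/card_gt0P; exists (inl true).
- by case=> [b|s] [b'|s'] //=; rewrite eq_sym.
- by case=> [b|s] //=; rewrite eqxx.
- by move=> j k; exists (dstar_path j k); apply: dstar_path_upath.
- by move=> j k p q /upath_dstar_path -> /upath_dstar_path ->.
Qed.

Lemma on_dstar_path i j k : on_path dstar i j k ->
  [\/ i = j, i = k |
      j != k /\ exists s, (j = inr s \/ k = inr s) /\ i = inl (side s)].
Proof.
move=> /(_ _ (dstar_path_upath j k)); rewrite /dstar_path.
case: eqP => [-> | /eqP jk]; first by rewrite inE => /eqP; constructor 1.
case: j k jk => [b|s] [b'|s'] jk; rewrite ?inE.
- by case/orP=> /eqP ->; [constructor 1|constructor 2].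
- case: ifP => [_|/negbT side_s']; rewrite !inE.
    by case/orP=> /eqP ->; [constructor 1|constructor 2].
  case/or3P=> /eqP ->; [constructor 1| |constructor 2] => //.
  constructor 3; split=> //; exists s'; split; first by right.
  by congr inl; move: side_s' {jk}; case: (side s'); case: b.
- case: ifP => _; rewrite !inE.
    by case/orP=> /eqP ->; [constructor 1|constructor 2].
  case/or3P=> /eqP ->; [constructor 1| |constructor 2] => //.
  by constructor 3; split=> //; exists s; split; first by left.
- case: ifP => _; rewrite !inE.
    case/or3P=> /eqP ->; [constructor 1| |constructor 2] => //.
    by constructor 3; split=> //; exists s; split; first by left.
  case/or4P=> /eqP ->; [constructor 1| | |constructor 2] => //.
    by constructor 3; split=> //; exists s; split; first by left.
  by constructor 3; split=> //; exists s'; split; first by right.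
Qed.

End DoubleStar.

Section Reachability.
Variables (W : finType) (a : rel W).

Lemma reachBP (B : {set W}) x :
  reflect (exists2 s, s \in B & connect a s x) (x \in reachB a B).
Proof.
apply: (iffP bigcupP) => -[s sB]; rewrite ?inE => sx; by exists s; rewrite ?inE.
Qed.

Lemma connect_to_source s t : s \in sources a -> connect a t s -> t = s.
Proof.
rewrite inE => /forallP src_s /connectP[p].
elim/last_ind: p => [//|p y _]; rewrite rcons_path last_rcons => /andP[_ arc] ys.
by move: (src_s (last t p)); rewrite ys arc.
Qed.

Lemma connect_last_arc s x :
  connect a s x -> s != x -> exists2 y, connect a s y & a y x.
Proof.
move=> /connectP[p]; elim/last_ind: p => [/= _ -> |p y _]; first by rewrite eqxx.
rewrite rcons_path last_rcons => /andP[sp arc] -> _.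
by exists (last s p) => //; apply/connectP; exists p.
Qed.

Definition source_of (w : W) : option W := [pick s in sources a | connect a s w].

Definition sources_of (A : {set W}) : {set W} :=
  [set s | [exists w in A, source_of w == Some s]].

Lemma sources_ofP (A : {set W}) w s : w \in A -> s \in sources a -> connect a s w ->
  exists2 r, r \in sources_of A & connect a r w.
Proof.
move=> wA src_s sw; case pick_w: (source_of w) => [r|].
  move: (pick_w); rewrite /source_of; case: pickP => // r' /andP[_ rw] [r'r]; subst r'.
  by exists r => //; rewrite inE; apply/existsP; exists w; rewrite wA pick_w eqxx.
by move: pick_w; rewrite /source_of; case: pickP => // /(_ s); rewrite src_s sw.
Qed.

Lemma sources_of_sub A : sources_of A \subset sources a.
Proof.
apply/subsetP => s; rewrite inE => /existsP[w /andP[_ /eqP]].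
by rewrite /source_of; case: pickP => // r /andP[src_r _] [<-].
Qed.

Lemma card_sources_of A : #|sources_of A| <= #|A|.
Proof.
apply: leq_trans (leq_imset_card (fun w => odflt w (source_of w)) A).
apply/subset_leq_card/subsetP => s; rewrite inE => /existsP[w /andP[wA /eqP pick_w]].
by apply/imsetP; exists w; rewrite // pick_w.
Qed.

End Reachability.

Section Decomposition.
Variables (W : finType) (a : rel W) (Vs : {set W}).
Hypothesis arc_into_compl : forall x y, a x y -> y \notin Vs -> x \in Vs.
Hypothesis Vs_inhabited : W -> 0 < #|Vs|.

Definition dense (Z : {set W}) :=
  (Z \subset sources a) && (2 * #|Z| <= #|Vs :&: reachB a Z|).

Lemma dense0 : dense set0.
Proof. by rewrite /dense sub0set cards0. Qed.

Definition Zmax := [arg max_(Z > set0 | dense Z) #|Z|].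

Lemma dense_Zmax : dense Zmax.
Proof. by rewrite /Zmax; case: arg_maxnP => //; exact: dense0. Qed.

Lemma Zmax_max Z : dense Z -> #|Z| <= #|Zmax|.
Proof. by rewrite /Zmax; case: arg_maxnP => [|Z0 _]; [exact: dense0|apply]. Qed.

Lemma Zmax_sources : Zmax \subset sources a.
Proof. by case/andP: dense_Zmax. Qed.

Definition Vp := Vs :\: reachB a Zmax.

Lemma card_Vp : #|Vp| + 2 * #|Zmax| <= #|Vs|.
Proof.
have := cardsID (reachB a Zmax) Vs; case/andP: dense_Zmax => _; rewrite -/Vp.
lia.
Qed.

(* Otherwise [s |: Zmax] would be a larger dense set. *)
Lemma connect_Vp_uniq s w1 w2 : s \in sources a -> s \notin Zmax ->
  w1 \in Vp -> w2 \in Vp -> connect a s w1 -> connect a s w2 -> w1 = w2.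
Proof.
move=> src_s s_Z w1_Vp w2_Vp s_w1 s_w2; apply/eqP/negPn/negP => w12.
suff /Zmax_max : dense (s |: Zmax) by rewrite cardsU1 s_Z ltnn.
case/andP: dense_Zmax => Z_src Z_dense; apply/andP; split.
  by rewrite subUset sub1set src_s Z_src.
have grow : (Vs :&: reachB a Zmax) :|: [set w1; w2]
              \subset Vs :&: reachB a (s |: Zmax).
  apply/subsetP => x; rewrite !inE => /orP[/andP[xV /reachBP[z zZ zx]]|].
    by rewrite xV; apply/reachBP; exists z; rewrite // !inE zZ orbT.
  case/orP=> /eqP->; [move: w1_Vp| move: w2_Vp]; rewrite inE => /andP[_ ->] /=;
    by apply/reachBP; exists s; rewrite // !inE eqxx.
have disj : [disjoint Vs :&: reachB a Zmax & [set w1; w2]].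
  rewrite -setI_eq0; apply/eqP/setP => x; rewrite !inE.
  apply/negP => /andP[/andP[_ xR] /orP[]/eqP xw];
    [move: w1_Vp | move: w2_Vp]; by rewrite !inE -xw xR.
apply: leq_trans (subset_leq_card grow).
rewrite cardsU1 s_Z cardsU (disjoint_setI0 disj) cards0 subn0 cards2 w12.
lia.
Qed.

Definition V1 : {set W} := [set x in take (#|Vp|./2) (enum Vp)].
Definition V2 := Vp :\: V1.

Lemma V1_sub : V1 \subset Vp.
Proof. by apply/subsetP => x; rewrite inE => /mem_take; rewrite mem_enum. Qed.

Lemma card_V1 : #|V1| = #|Vp|./2.
Proof.
rewrite /V1 cardsE (card_uniqP (take_uniq _ (enum_uniq (mem Vp)))).
by rewrite size_takel // -cardE leq_half_double -addnn; apply/leqW/leq_addr.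
Qed.

Lemma card_V2 : #|V2| = uphalf #|Vp|.
Proof. by rewrite /V2 cardsDS ?V1_sub // card_V1; lia. Qed.

Definition side (s : W) : bool := [exists w in V1, connect a s w].

Definition centre_bag (b : bool) : {set W} :=
  Zmax :|: sources_of a (if b then V1 else V2).

Definition leaves := sources a :\: (centre_bag true :|: centre_bag false).

Definition bag (i : dstar_node W) : {set W} :=
  match i with
  | inl b => centre_bag b
  | inr s => if s \in leaves then [set s] else set0
  end.

Lemma centre_bag_sources b : centre_bag b \subset sources a.
Proof. by rewrite subUset Zmax_sources sources_of_sub. Qed.

Lemma card_centre_bag b : #|centre_bag b| <= uphalf #|Vs|.
Proof.
apply: leq_trans (leq_card_setU _ _) _.
have := card_Vp; have := card_sources_of a (if b then V1 else V2).
by case: b; rewrite ?card_V1 ?card_V2; lia.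
Qed.

Lemma Vs_reach_side s w : s \in sources a -> s \notin Zmax -> w \in Vs ->
  connect a s w -> exists2 r, r \in centre_bag (side s) & connect a r w.
Proof.
move=> src_s s_Z wV sw; case: (boolP (w \in reachB a Zmax)) => [/reachBP[z zZ zw]|wR].
  by exists z; rewrite // inE zZ.
have w_Vp : w \in Vp by rewrite inE wR.
have centre_reach b :
    w \in (if b then V1 else V2) -> exists2 r, r \in centre_bag b & connect a r w.
  move=> wA; have [r rA rw] := sources_ofP wA src_s sw.
  by exists r; rewrite // inE rA orbT.
case: (boolP (w \in V1)) => w1.
  suff -> : side s by apply: centre_reach.
  by apply/existsP; exists w; rewrite w1.
have -> : side s = false.
  apply/negbTE/existsP => -[w' /andP[w'1 sw']].
  have w'w := connect_Vp_uniq src_s s_Z (subsetP V1_sub _ w'1) w_Vp sw' sw.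
  by move: w1; rewrite -w'w w'1.
by apply: centre_reach; rewrite inE w1.
Qed.

Lemma reach_side s x : s \in sources a -> s \notin Zmax ->
  connect a s x -> x != s -> x \in reachB a (centre_bag (side s)).
Proof.
move=> src_s s_Z sx xs; case: (boolP (x \in Vs)) => xV.
  by have [r rX rx] := Vs_reach_side src_s s_Z xV sx; apply/reachBP; exists r.
have [y sy yx] := connect_last_arc sx (ltac:(by rewrite eq_sym)).
have [r rX ry] := Vs_reach_side src_s s_Z (arc_into_compl yx xV) sy.
by apply/reachBP; exists r => //; apply: connect_trans ry (connect1 yx).
Qed.

(* A leaf [s] is reached from no other bag, so the common reach lies beyond [s]. *)
Lemma reach_leaf_side s k x :
  x \in reachB a (bag (inr s)) -> x \in reachB a (bag k) -> k != inr s ->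
  x \in reachB a (centre_bag (side s)).
Proof.
move=> /reachBP[t]; rewrite /bag; case: ifP => [s_leaf|_]; last by rewrite inE.
rewrite inE => /eqP -> sx /reachBP[t' t'k t'x] ks.
move: (s_leaf); rewrite in_setD in_setU negb_or => /andP[/andP[s_C1 s_C2] src_s].
have s_C b : s \notin centre_bag b by case: b.
have s_Z : s \notin Zmax by apply: contra s_C1; rewrite inE => ->.
apply: reach_side => //; apply: contra_neq ks => xs; subst x.
move: t'k; rewrite (connect_to_source src_s t'x).
case: k => [b|s'] /=; first by rewrite (negbTE (s_C b)).
by case: ifP => _; rewrite inE // => /eqP ->.
Qed.

Lemma dstar_dag_td : is_dag_td a (dstar side) bag.
Proof.
split.
- exact: dstar_tree.
- case=> [b|s] /=; first exact: centre_bag_sources.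
  by case: ifP => [|_]; rewrite ?sub0set // inE sub1set => /andP[].
- move=> s src_s.
  case: (boolP (s \in centre_bag true)) => s1; first by exists (inl true).
  case: (boolP (s \in centre_bag false)) => s2; first by exists (inl false).
  have s_leaf : s \in leaves by rewrite in_setD in_setU negb_or s1 s2 src_s.
  by exists (inr s); rewrite /= s_leaf set11.
- move=> i j k /on_dstar_path[-> | -> | [jk [s [leaf_s ->]]]].
  + exact: subsetIl.
  + exact: subsetIr.
  + apply/subsetP => x /setIP[xj xk].
    case: leaf_s => leaf_s; subst.
      by apply: reach_leaf_side xj xk _; rewrite eq_sym.
    exact: reach_leaf_side xk xj _.
Qed.

Lemma dstar_width : td_width bag <= uphalf #|Vs|.
Proof.
apply/bigmax_leqP => -[b|s] _ /=; first exact: card_centre_bag.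
case: ifP => _; rewrite ?cards0 // cards1; have := Vs_inhabited s; lia.
Qed.

Lemma dtw_le_uphalf : dtw_le a (uphalf #|Vs|).
Proof.
exists (dstar_node W), (dstar side), bag.
by split; [apply: dstar_dag_td | apply: dstar_width].
Qed.

End Decomposition.

Lemma sub_adj_into_inr (V : finType) (e : rel V) (F : {set {set V}}) x s :
  sub_adj e F x (inr s) -> exists u, x = inl u.
Proof. by case: x => [u|] //; exists u. Qed.

Theorem mainTheorem15 (V : finType) (e : rel V) (F : {set {set V}}) :
  symmetric e -> irreflexive e ->
  (forall s, s \in F -> exists u v, e u v /\ s = [set u; v]) ->
  dtw_undir_le (sub_adj e F) (uphalf #|V|).
Proof.
move=> _ _ F_edges a orient _.
pose Vs := [set inl v | v : V] : {set sub_vert F}.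
have in_Vs v : inl v \in Vs by apply: imset_f.
have -> : #|V| = #|Vs| by rewrite card_imset ?cardsT // => ? ? [].
apply: dtw_le_uphalf.
- move=> x [v|s] /(orient x _).1 arc; first by rewrite in_Vs.
  by have [u ->] := sub_adj_into_inr arc.
- case=> [v|[s sF]]; apply/card_gt0P; first by exists (inl v).
  by have [u [_ [_ _]]] := F_edges s sF; exists (inl u).
Qed.
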